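(* Let $H \subset L$ be light-cone regular and let $h_1, \ldots, h_m \in L$. Then for every sufficiently large integer $\ell > 0$ we have $h_1, \ldots, h_m \in H + \ell v_N = \{ h + \ell v_N \mid h \in H \}$.
   Context: Let $L$ be a finitely generated $\mathbb{Z}$-module and $v_1,\dots,v_N\in L$ distinct elements which generate $L$ as a $\mathbb{Z}$-module and are linearly independent over $\mathbb{Z}_{\ge 0}$ (i.e. $\sum_i a_i v_i=0$ with all $a_i\in\mathbb{Z}_{\ge0}$ forces all $a_i=0$). Let $S=\{\sum_i a_iv_i : a_i\in\mathbb{Z}_{\ge0}\}$ and define the partial order $h_1\le h_2$ iff $h_1-h_2\in S$. Assume $v_N$ is the minimum of $\{0,v_1,\dots,v_N\}$ with respect to $\le$. A nonempty subset $H\subset L$ is light-cone regular if for every $h\in H$ the set $\{h'\in H: h'\le h\}$ is finite and $\{h'\in L: h'\ge h\}\subset H$. *)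

From HB Require Import structures.
From mathcomp Require Import all_boot all_order all_algebra.
Set Implicit Arguments. Unset Strict Implicit. Unset Printing Implicit Defensive.
Import GRing.Theory.
Local Open Scope ring_scope.

(* Vectors v_1, ..., v_N are encoded as v : 'I_N.+1 -> L (0-based indices);
   the paper's v_N is  v ord_max . *)

Definition inS (L : zmodType) (n : nat) (v : 'I_n -> L) (x : L) : Prop :=
  exists a : 'I_n -> nat, x = \sum_(i < n) v i *+ a i.

Definition leS (L : zmodType) (n : nat) (v : 'I_n -> L) (h1 h2 : L) : Prop :=
  inS v (h1 - h2).

Definition good_generators (L : zmodType) (n : nat) (v : 'I_n.+1 -> L) : Prop :=
  [/\ injective v,
      (forall x : L, exists z : 'I_n.+1 -> int, x = \sum_(i < n.+1) v i *~ z i),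
      (forall a : 'I_n.+1 -> nat,
          \sum_(i < n.+1) v i *+ a i = 0 -> forall i, a i = 0%N),
      leS v (v ord_max) 0
    & forall i, leS v (v ord_max) (v i)].

Definition light_cone_regular (L : zmodType) (n : nat) (v : 'I_n -> L)
    (H : L -> Prop) : Prop :=
  (exists h, H h) /\
  forall h, H h ->
    (exists s : seq L, forall h', H h' -> leS v h' h -> h' \in s) /\
    (forall h', leS v h h' -> H h').

From mathcomp Require Import all_boot all_order all_algebra.
Import GRing.Theory.
Local Open Scope ring_scope.

(* Since v_N - v_i lies in S for every i, a term -k v_i of an integer
   combination of the generators is absorbed by k copies of v_N; so for any x
   in L (an integer combination of the v_i) and all large l, x + l v_N lies in
   S.  Taking x = h - h_j for some h in H gives h <= h_j - l v_N, hence
   h_j - l v_N is in H by upward closure. *)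

Section Semigroup.
Variables (L : zmodType) (n : nat) (v : 'I_n -> L).

Lemma inS0 : inS v 0.
Proof. by exists (fun=> 0%N); rewrite big1 // => i _; rewrite mulr0n. Qed.

Lemma inSD x y : inS v x -> inS v y -> inS v (x + y).
Proof.
case=> a ->; case=> b ->; exists (fun i => (a i + b i)%N).
by rewrite -big_split /=; apply: eq_bigr => i _; rewrite mulrnDr.
Qed.

Lemma inSMn x k : inS v x -> inS v (x *+ k).
Proof.
move=> Sx; elim: k => [|k IHk]; first by rewrite mulr0n; apply: inS0.
by rewrite mulrS; apply: inSD.
Qed.

Lemma inS_gen i : inS v (v i).
Proof.
exists (fun j => nat_of_bool (j == i)).
rewrite (bigD1 i) //= eqxx mulr1n big1 ?addr0 // => j /negbTE ->.
by rewrite mulr0n.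
Qed.

End Semigroup.

Section Absorption.
Variables (L : zmodType) (n : nat) (v : 'I_n -> L) (w : L).
Hypothesis w_inS : inS v w.
Hypothesis w_le_gen : forall i, leS v w (v i).

Definition absorbed (x : L) : Prop :=
  exists K : nat, forall l, (K <= l)%N -> inS v (x + w *+ l).

Lemma absorbed0 : absorbed 0.
Proof. by exists 0%N => l _; rewrite add0r; apply: inSMn. Qed.

Lemma absorbedD x y : absorbed x -> absorbed y -> absorbed (x + y).
Proof.
case=> Kx Sx [Ky Sy]; exists (Kx + Ky)%N => l le_Kl.
have le_Kx_l : (Kx <= l)%N by apply: leq_trans le_Kl; apply: leq_addr.
rewrite -(subnKC le_Kx_l) mulrnDr addrACA.
apply: inSD; first exact: Sx.
by apply: Sy; rewrite leq_subRL.
Qed.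

Lemma absorbed_genz i z : absorbed (v i *~ z).
Proof.
case: z => k.
  exists 0%N => l _; rewrite -pmulrn.
  by apply: inSD; apply: inSMn => //; apply: inS_gen.
exists k.+1 => l le_kl; rewrite NegzE mulrNz -pmulrn -(subnKC le_kl) mulrnDr.
rewrite addrA (addrC (- _)) -mulrnBl.
by apply: inSD; apply: inSMn => //; apply: w_le_gen.
Qed.

Lemma absorbed_span z : absorbed (\sum_(i < n) v i *~ z i).
Proof.
apply: (big_ind absorbed); [exact: absorbed0 | exact: absorbedD |].
by move=> i _; apply: absorbed_genz.
Qed.

Lemma absorbed_uniform (s : seq L) : {in s, forall x, absorbed x} ->
  exists K : nat, forall l, (K <= l)%N -> {in s, forall x, inS v (x + w *+ l)}.
Proof.
elim: s => [|x s IHs] absorbed_s; first by exists 0%N.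
have [Kx Sx] := absorbed_s x (mem_head x s).
have [Ks Ss] : exists K : nat, forall l, (K <= l)%N ->
    {in s, forall y, inS v (y + w *+ l)}.
  by apply: IHs => y sy; apply: absorbed_s; rewrite inE sy orbT.
exists (maxn Kx Ks) => l; rewrite geq_max => /andP[le_Kx_l le_Ks_l] y.
by rewrite inE => /predU1P[-> | sy]; [apply: Sx | apply: Ss].
Qed.

End Absorption.

Theorem lemma3p2 (L : zmodType) (n : nat) (v : 'I_n.+1 -> L)
    (Hv : good_generators v) (H : L -> Prop)
    (HH : light_cone_regular v H) (m : nat) (hs : 'I_m -> L) :
  exists l0 : nat, forall l : nat, (l0 <= l)%N -> (0 < l)%N ->
    forall j : 'I_m, exists h : L, H h /\ hs j = h + v ord_max *+ l.
Proof.
have [_ span_v _ _ vN_le_gen] := Hv.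
have [[h0 Hh0] regular_H] := HH.
have [|K SK] := @absorbed_uniform L _ v (v ord_max) [seq h0 - hs j | j : 'I_m].
  move=> _ /mapP[j _ ->]; have [z ->] := span_v (h0 - hs j).
  by apply: absorbed_span => //; apply: inS_gen.
exists K => l le_Kl _ j; exists (hs j - v ord_max *+ l); split; last by rewrite subrK.
apply: (proj2 (regular_H h0 Hh0)).
rewrite /leS opprB addrA addrAC; apply: SK => //.
by apply/mapP; exists j; rewrite ?mem_enum.
Qed.
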